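(* Let $\Delta\in\mathbb F^{m\times m}$ be a connection matrix with column/row partition $J_0,\dots,J_b$. Let $\widetilde\Delta^{m-1}$ be the last matrix produced by the Row Cancellation Algorithm (RCA) applied to $\Delta$, and let $\widetilde\Delta(1)^{m-1},\dots,\widetilde\Delta(b)^{m-1}$ be the matrices produced by the Block Sequential Row Cancellation Algorithm applied to $\Delta$. Then $\widetilde\Delta^{m-1}_{J_{k-1}J_k}=\widetilde\Delta(k)^{m-1}_{J_{k-1}J_k}$ for $k=1,\dots,b$, and the set of positions marked as primary pivots in the RCA run on $\Delta$ equals the union over $k$ of the sets of positions marked as primary pivots in the RCA runs on $\widetilde\Delta(k)$.
   Context: Throughout, $\mathbb F$ is a field and $m\ge1$. $A_{IJ}$ is the submatrix of $A$ with rows in $I$ and columns in $J$. $U^{pq}$ is the $m\times m$ matrix whose only nonzero entry is a $1$ in position $(p,q)$. Superscripts on matrices are indices, not powers. A connection matrix (over $\mathbb F$) is a matrix $\Delta\in\mathbb F^{m\times m}$ together with a partition $\{1,\dots,m\}=J_0\sqcup\cdots\sqcup J_b$ (the column/row partition; the $J_k$ need not consist of consecutive integers) such that $\Delta$ is upper triangular, $\Delta\Delta=0$, and $\Delta_{ij}=0$ unless $i<j$ and $(i,j)\in\bigcup_{k=1}^bJ_{k-1}\times J_k$. For $1\le r\le m-1$ the $r$-th diagonal is $\{(j-r,j):r<j\le m\}$. Row Cancellation Algorithm (RCA) applied to a connection matrix $\Delta$: set $\widetilde\Delta^0=\widetilde\Delta^1=\Delta$. For $r=1,\dots,m-1$ in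 turn: (Markup) mark permanently as a primary pivot every position $(j-r,j)$ on the $r$-th diagonal with $\widetilde\Delta^r_{j-r,j}\ne0$ such that no position of column $j$ was marked as a primary pivot at an earlier iteration. (Update, only for $r\le m-2$) If no position was marked at iteration $r$, put $\widetilde T^r=I$; otherwise let $j_1<\cdots<j_t$ be the columns of the positions marked at iteration $r$, let $\widetilde T^{r,s}=I-\sum_{q=j_s+1}^m\frac{\widetilde\Delta^r_{j_s-r,q}}{\widetilde\Delta^r_{j_s-r,j_s}}U^{j_sq}$ and $\widetilde T^r=\widetilde T^{r,1}\cdots\widetilde T^{r,t}$. Set $\widetilde\Delta^{r+1}=(\widetilde T^r)^{-1}\widetilde\Delta^r\widetilde T^r$. Block Sequential Row Cancellation Algorithm applied to $\Delta$: set $\widetilde{\mathcal J}_0=\emptyset$. For $k=1,\dots,b$ in turn: let $\widetilde\Delta(k)$ be the matrix that agrees with $\Delta$ at the positions in $(J_{k-1}\setminus\widetilde{\mathcal J}_{k-1})\times J_k$ and is zero elsewhere (a connection matrix with the same partition); apply RCA to $\widetilde\Delta(k)$, obtaining $\widetilde\Delta(k)^0,\dots,\widetilde\Delta(k)^{m-1}$; let $\widetilde{\mathcal J}_k$ be the set of indices of columns containing primary pivot positions in this run. *)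

From HB Require Import structures.
From mathcomp Require Import all_boot all_order all_algebra.
Set Implicit Arguments. Unset Strict Implicit. Unset Printing Implicit Defensive.
Import GRing.Theory.
Local Open Scope ring_scope.

(* Indices are 0-based: 'I_m = {0,...,m-1} stands for {1,...,m}.
   The partition J_0,...,J_b is encoded by a block map blk : 'I_m -> nat,
   J_k = {i | blk i = k}. *)

Definition dsub (m : nat) (j : 'I_m) (r : nat) : 'I_m :=
  Ordinal (leq_ltn_trans (leq_subr r j) (ltn_ord j)).

Definition Umx (F : fieldType) (m : nat) (p q : 'I_m) : 'M[F]_m :=
  \matrix_(i, j) ((i == p) && (j == q))%:R.

Definition is_partition (m b : nat) (blk : 'I_m -> nat) : Prop :=
  (forall i, (blk i <= b)%N) /\ (forall k, (k <= b)%N -> exists i, blk i = k).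

Definition connection_matrix (F : fieldType) (m b : nat) (blk : 'I_m -> nat)
    (D : 'M[F]_m) : Prop :=
  is_partition b blk /\
  (forall i j : 'I_m, (j < i)%N -> D i j = 0) /\
  D *m D = 0 /\
  (forall i j : 'I_m, D i j != 0 -> (i < j)%N /\ (1 <= blk j)%N /\ blk i = (blk j).-1).

Definition Trs (F : fieldType) (m : nat) (D : 'M[F]_m) (r : nat) (js : 'I_m)
    : 'M[F]_m :=
  1%:M - \sum_(q : 'I_m | (js < q)%N) (D (dsub js r) q / D (dsub js r) js) *: @Umx F m js q.

(* state of RCA: current matrix and list of primary pivot positions (row, col) *)
Definition rca_state (F : fieldType) (m : nat) := ('M[F]_m * seq ('I_m * 'I_m))%type.

Definition marked_cols (F : fieldType) (m : nat) (r : nat) (st : rca_state F m)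
    : seq 'I_m :=
  [seq j : 'I_m <- enum 'I_m | [&& (r <= j)%N, st.1 (dsub j r) j != 0 &
                             j \notin map snd st.2]].

Definition rca_step (F : fieldType) (m : nat) (st : rca_state F m) (r : nat)
    : rca_state F m :=
  let D := st.1 in
  let js := marked_cols r st in
  let P' := st.2 ++ map (fun j => (dsub j r, j)) js in
  let T := foldr (fun j M => Trs D r j *m M) 1%:M js in
  let D' := if (r <= m - 2)%N && (js != [::]) then invmx T *m D *m T else D in
  (D', P').

Definition rca_run (F : fieldType) (m : nat) (D : 'M[F]_m) : rca_state F m :=
  foldl (@rca_step F m) (D, [::]) (iota 1 (m - 1)).

Definition rca_final (F : fieldType) (m : nat) (D : 'M[F]_m) : 'M[F]_m :=
  (rca_run D).1.

Definition rca_pivots (F : fieldType) (m : nat) (D : 'M[F]_m) : {set 'I_m * 'I_m} :=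
  [set p | p \in (rca_run D).2].

Definition rca_pivot_cols (F : fieldType) (m : nat) (D : 'M[F]_m) : {set 'I_m} :=
  [set j | j \in map snd (rca_run D).2].

Definition bs_input (F : fieldType) (m : nat) (blk : 'I_m -> nat) (D : 'M[F]_m)
    (k : nat) (Jprev : {set 'I_m}) : 'M[F]_m :=
  \matrix_(i, j) (if [&& blk i == k.-1, i \notin Jprev & blk j == k] then D i j else 0).

Fixpoint bs_cols (F : fieldType) (m : nat) (blk : 'I_m -> nat) (D : 'M[F]_m)
    (k : nat) : {set 'I_m} :=
  match k with
  | 0 => set0
  | k'.+1 => rca_pivot_cols (bs_input blk D k'.+1 (bs_cols blk D k'))
  end.

Definition bs_matrix (F : fieldType) (m : nat) (blk : 'I_m -> nat) (D : 'M[F]_m)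
    (k : nat) : 'M[F]_m :=
  bs_input blk D k (bs_cols blk D k.-1).

From HB Require Import structures.
From mathcomp Require Import all_boot all_order all_algebra.
From mathcomp Require Import zify.
Set Implicit Arguments. Unset Strict Implicit. Unset Printing Implicit Defensive.
Import GRing.Theory.
Local Open Scope ring_scope.

(* Each iteration of RCA conjugates the current matrix by a product of
   elimination matrices; these are unitriangular and only add multiples of a
   column of some block J_k to later columns of the same block.  Such
   conjugations keep the shape of a connection matrix and never mix blocks,
   and an invariant of the algorithm ([rca_inv]) shows that they leave the
   rows of earlier pivots untouched and that rows indexed by pivot columns
   vanish.  Consequently RCA run on Delta(k) is, iteration by iteration, RCA
   run on Delta followed by restriction to (J_{k-1} \ ~J_{k-1}) x J_k: the
   rows deleted from Delta(k) are pivot columns of the full run, and the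
   columns marked in the run on Delta(k) are the columns of J_k marked in the
   run on Delta.  In particular ~J_k consists of the pivot columns of the full
   run lying in J_k, which drives an induction on k. *)

Section MatrixFacts.
Variables (F : fieldType) (m : nat).
Implicit Types (A B D T : 'M[F]_m).

Lemma mulmx_entry_neq0 A B i j : (A *m B) i j != 0 -> exists k, A i k != 0 /\ B k j != 0.
Proof.
move=> nz; have /existsP[k /andP[]] : [exists k, (A i k != 0) && (B k j != 0)].
  apply: contraNT nz => /existsPn noK; rewrite mxE big1 // => k _.
  by have := noK k; rewrite negb_and !negbK => /orP[]/eqP->; rewrite ?mul0r ?mulr0.
by exists k.
Qed.

Lemma ord_gtn_eqF (i j : 'I_m) : (j < i)%N -> (i == j) = false.
Proof. exact: gtn_eqF. Qed.

Lemma ord_ltn_neqAle (i j : 'I_m) : (i < j)%N = (i != j) && (i <= j)%N.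
Proof. exact: ltn_neqAle. Qed.

Lemma mulmx_idrow A B i l : (forall k, A i k = (i == k)%:R) -> (A *m B) i l = B i l.
Proof.
move=> Ai; rewrite mxE (bigD1 i) //= Ai eqxx mul1r big1 ?addr0 // => k /negbTE ki.
by rewrite Ai eq_sym ki mul0r.
Qed.

Lemma invmx_mul A B : A \in unitmx -> B \in unitmx -> invmx (A *m B) = invmx B *m invmx A.
Proof.
move=> uA uB; have uAB : A *m B \in unitmx by rewrite unitmx_mul uA uB.
by rewrite -[RHS](mulKmx uAB) -mulmxA (mulmxA B) mulmxV // mul1mx mulmxV // mulmx1.
Qed.

Lemma sq0_conj D T : D *m D = 0 -> T \in unitmx ->
  (invmx T *m D *m T) *m (invmx T *m D *m T) = 0.
Proof.
move=> DD uT; rewrite -!mulmxA mulKVmx // (mulmxA D) DD mul0mx.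
by rewrite mulmx0.
Qed.

End MatrixFacts.

Section BlockUnitriangular.
Variables (F : fieldType) (m : nat) (blk : 'I_m -> nat).
Implicit Types (A B M X Y : 'M[F]_m) (S : pred 'I_m).

(* Right multiplication by such a matrix adds multiples of the columns in [S]
   to later columns of the same block. *)
Record block_unitri S M : Prop := BlockUnitri {
  unitri_idrow : forall i l, ~~ S i -> M i l = (i == l)%:R;
  unitri_lower : forall i l : 'I_m, (l <= i)%N -> M i l = (i == l)%:R;
  unitri_blk : forall i l, M i l != 0 -> blk i = blk l }.

Lemma block_unitri1 S : block_unitri S 1%:M.
Proof.
split=> [i l _|i l _|i l]; rewrite mxE //.
by case: (eqVneq i l) => [->|_]; rewrite ?eqxx.
Qed.

Lemma block_unitri_sub S S' M : {subset S <= S'} -> block_unitri S M ->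
  block_unitri S' M.
Proof. by move=> sSS' [idM loM blkM]; split=> // i l /(contra (sSS' i)); apply: idM. Qed.

Lemma unitri_upper S M i l : block_unitri S M -> M i l != 0 -> (i <= l)%N.
Proof.
case=> _ loM _; apply: contraNleq => li.
by rewrite loM ?(ltnW li) // (ord_gtn_eqF li).
Qed.

Lemma block_unitri_mul S A B : block_unitri S A -> block_unitri S B ->
  block_unitri S (A *m B).
Proof.
move=> uA [idB loB blkB]; have [idA loA blkA] := uA; split.
- by move=> i l Si; rewrite mulmx_idrow ?idB // => k; rewrite idA.
- move=> i l li; rewrite mxE (bigD1 i) //= loA // eqxx mul1r loB //.
  rewrite big1 ?addr0 // => k ki.
  have [lt_ki|le_ik] := ltnP k i.
    by rewrite loA ?(ltnW lt_ki) // (ord_gtn_eqF lt_ki) mul0r.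
  have lt_ik : (i < k)%N by rewrite ltn_neqAle eq_sym ki le_ik.
  have lt_lk := leq_ltn_trans li lt_ik.
  by rewrite (loB k l) ?(ltnW lt_lk) // (ord_gtn_eqF lt_lk) mulr0.
- by move=> i l /mulmx_entry_neq0[k [/blkA -> /blkB]].
Qed.

Lemma mulmx_unitri_fix S M X i (q : 'I_m) : block_unitri S M ->
  (forall l, S l -> (l < q)%N -> X i l = 0) -> (X *m M) i q = X i q.
Proof.
case=> idM loM _ Xi0; rewrite mxE (bigD1 q) //= loM // eqxx mulr1 big1 ?addr0 // => l lq.
have [Sl|nSl] := boolP (S l); last by rewrite idM // (negbTE lq) mulr0.
have [lt_lq|le_ql] := ltnP l q; first by rewrite Xi0 // mul0r.
by rewrite loM // (negbTE lq) mulr0.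
Qed.

Lemma unitri_mulmx_eq0 S M Y (i q : 'I_m) : block_unitri S M ->
  (forall l : 'I_m, (i <= l)%N -> Y l q = 0) -> (M *m Y) i q = 0.
Proof.
move=> uM Y0; rewrite mxE big1 // => l _.
have [->|Mil] := eqVneq (M i l) 0; first by rewrite mul0r.
by rewrite Y0 ?mulr0 // (unitri_upper uM Mil).
Qed.

Lemma unitri_mulmx_id S M X : block_unitri S M ->
  (forall a l i, X a l != 0 -> blk i = blk a -> ~~ S i) -> M *m X = X.
Proof.
move=> [idM _ blkM] XS; apply/matrixP=> i l.
have [Si|nSi] := boolP (S i); last by rewrite mulmx_idrow // => k; rewrite idM.
have [Xil|/(XS _ _ i)/(_ erefl)] := eqVneq (X i l) 0; last by rewrite Si.
rewrite Xil mxE big1 // => a _; have [->|Mia] := eqVneq (M i a) 0; first by rewrite mul0r.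
have [->|/(XS _ _ i)/(_ (blkM _ _ Mia))] := eqVneq (X a l) 0; first by rewrite mulr0.
by rewrite Si.
Qed.

End BlockUnitriangular.

Section Elimination.
Variables (F : fieldType) (m : nat) (blk : 'I_m -> nat).
Implicit Types (D Y : 'M[F]_m) (c : 'I_m -> F).

Definition elim_nil c (j : 'I_m) : 'M[F]_m := \sum_(q : 'I_m | (j < q)%N) c q *: @Umx F m j q.

Definition elim_mx c j := 1%:M - elim_nil c j.

Lemma elim_nilE c j i l : elim_nil c j i l = ((i == j) && (j < l)%N)%:R * c l.
Proof.
rewrite summxE big_mkcond (bigD1 l) //= big1 ?addr0 => [|q ql]; last first.
  by rewrite !mxE (eq_sym l) (negbTE ql) andbF mulr0 if_same.
by rewrite !mxE eqxx andbT; case: (j < l)%N; rewrite ?andbT ?andbF ?mul0r // mulrC.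
Qed.

Lemma elim_mxE c j i l : elim_mx c j i l = (i == l)%:R - ((i == j) && (j < l)%N)%:R * c l.
Proof. by rewrite !mxE elim_nilE. Qed.

Lemma elim_nil_sq0 c c' j : elim_nil c j *m elim_nil c' j = 0.
Proof.
apply/matrixP=> i l; rewrite !mxE big1 // => k _; rewrite !elim_nilE.
by case: (eqVneq k j) => [->|kj]; rewrite ?ltnn ?andbF ?mul0r ?mulr0.
Qed.

Lemma elim_mxN c j : elim_mx c j *m elim_mx (fun l => - c l) j = 1%:M.
Proof.
have nilN : elim_nil (fun l => - c l) j = - elim_nil c j.
  by rewrite /elim_nil -sumrN; apply: eq_bigr => q _; rewrite scaleNr.
by rewrite /elim_mx nilN opprK mulmxBl !mulmxDr !mulmx1 mul1mx elim_nil_sq0 addr0 addrK.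
Qed.

Lemma elim_mx_unit c j : elim_mx c j \in unitmx.
Proof. by case: (mulmx1_unit (elim_mxN c j)). Qed.

Lemma invmx_elim_mx c j : invmx (elim_mx c j) = elim_mx (fun l => - c l) j.
Proof. by rewrite -[LHS]mulmx1 -(elim_mxN c j) mulKmx ?elim_mx_unit. Qed.

Lemma block_unitri_elim_mx c j : (forall l, c l != 0 -> blk l = blk j) ->
  block_unitri blk (pred1 j) (elim_mx c j).
Proof.
move=> blkc; split=> i l; rewrite elim_mxE.
- by move=> /= /negbTE->; rewrite mul0r subr0.
- move=> li; case: (eqVneq i j) => [ij|]; last by rewrite mul0r subr0.
  by rewrite -ij ltnNge li mul0r subr0.
case: (eqVneq i j) => [->|ij]; last first.
  by rewrite mul0r subr0; case: (eqVneq i l) => [->|]; rewrite ?eqxx.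
case: (eqVneq j l) => [->//|jl]; case: (j < l)%N; rewrite ?mul0r ?subrr ?eqxx //.
by rewrite mul1r sub0r oppr_eq0 => /blkc.
Qed.

Lemma mulmx_elim_mxE Y c j i q :
  (Y *m elim_mx c j) i q = Y i q - Y i j * ((j < q)%N%:R * c q).
Proof.
rewrite mulmxBr mulmx1 !mxE; congr (_ - _).
rewrite (bigD1 j) //= elim_nilE eqxx big1 ?addr0 // => l lj.
by rewrite elim_nilE (negbTE lj) mul0r mulr0.
Qed.

End Elimination.

Section EliminationProduct.
Variables (F : fieldType) (m : nat) (blk : 'I_m -> nat).
Implicit Types (D : 'M[F]_m) (js : seq 'I_m).

Definition graded D := forall i j : 'I_m, D i j != 0 ->
  (i < j)%N /\ (1 <= blk j)%N /\ blk i = (blk j).-1.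

Definition pivot_ratio D r (j : 'I_m) (l : 'I_m) : F := D (dsub j r) l / D (dsub j r) j.

Lemma graded_lower0 D (i j : 'I_m) : graded D -> (j <= i)%N -> D i j = 0.
Proof. by move=> gD; apply: contraTeq => /gD[ij _]; rewrite -ltnNge. Qed.

Lemma graded_conj S S' D M N : graded D -> block_unitri blk S M -> block_unitri blk S' N ->
  graded (N *m D *m M).
Proof.
move=> gD uM uN i l /mulmx_entry_neq0[b [/mulmx_entry_neq0[a [Nia Dab]] Mbl]].
have [ab [bb1 blk_ab]] := gD _ _ Dab.
split; first exact: leq_ltn_trans (unitri_upper uN Nia) (leq_trans ab (unitri_upper uM Mbl)).
by rewrite -(unitri_blk uM Mbl) (unitri_blk uN Nia).
Qed.

Lemma TrsE D r j : Trs D r j = elim_mx (pivot_ratio D r j) j.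
Proof. by []. Qed.

Lemma pivot_ratio_blk D r j l : graded D -> pivot_ratio D r j l != 0 -> blk l = blk j.
Proof.
move=> gD; rewrite mulf_eq0 negb_or invr_eq0 => /andP[/gD[_ [bl1 bl]] /gD[_ [bj1 bj]]].
by rewrite -(prednK bl1) -(prednK bj1) -bl -bj.
Qed.

Definition elim_prod D r js : 'M[F]_m := foldr (fun j M => Trs D r j *m M) 1%:M js.

Lemma elim_prod_cat D r js js' : elim_prod D r (js ++ js') = elim_prod D r js *m elim_prod D r js'.
Proof. by elim: js => [|j js IH] /=; rewrite ?mul1mx // IH mulmxA. Qed.

Lemma elim_prod_unit D r js : elim_prod D r js \in unitmx.
Proof. by elim: js => [|j js IH] /=; rewrite ?unitmx1 // unitmx_mul elim_mx_unit. Qed.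

Lemma block_unitri_Trs D r j : graded D -> block_unitri blk (pred1 j) (Trs D r j).
Proof. by move=> gD; apply: block_unitri_elim_mx => l; apply: pivot_ratio_blk. Qed.

Lemma block_unitri_elim_prod D r js : graded D -> block_unitri blk (mem js) (elim_prod D r js).
Proof.
move=> gD; elim: js => [|j js IH] /=; first exact: block_unitri1.
apply: block_unitri_mul; last by apply: block_unitri_sub IH => x xs; rewrite inE xs orbT.
by apply: block_unitri_sub (block_unitri_Trs r j gD) => x /eqP ->; rewrite mem_head.
Qed.

Lemma block_unitri_invmx_elim_prod D r js : graded D ->
  block_unitri blk (mem js) (invmx (elim_prod D r js)).
Proof.
move=> gD; elim: js => [|j js IH] /=; first by rewrite invmx1; apply: block_unitri1.
rewrite invmx_mul ?elim_mx_unit ?elim_prod_unit // invmx_elim_mx.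
apply: block_unitri_mul; first by apply: block_unitri_sub IH => x xs; rewrite inE xs orbT.
apply: (@block_unitri_sub _ _ _ (pred1 j)); first by move=> x /eqP ->; rewrite mem_head.
by apply: block_unitri_elim_mx => l; rewrite oppr_eq0; apply: pivot_ratio_blk.
Qed.

Lemma eq_elim_prod D D' r js :
  (forall j q, j \in js -> D' (dsub j r) q = D (dsub j r) q) ->
  elim_prod D' r js = elim_prod D r js.
Proof.
elim: js => [//|j js IH] eqrows.
have eq_js : elim_prod D' r js = elim_prod D r js.
  by apply: IH => x q xjs; apply: eqrows; rewrite inE xjs orbT.
have eqrow q : D' (dsub j r) q = D (dsub j r) q := eqrows j q (mem_head j js).
have eq_j : Trs D' r j = Trs D r j by congr (_ - _); apply: eq_bigr => q _; rewrite !eqrow.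
by change (Trs D' r j *m elim_prod D' r js = Trs D r j *m elim_prod D r js); rewrite eq_j eq_js.
Qed.

Lemma elim_prod_filter_blk D r js b (l j : 'I_m) : graded D -> blk l = b ->
  elim_prod D r [seq x <- js | blk x == b] l j = elim_prod D r js l j.
Proof.
move=> gD; elim: js l j => [//|x js IH] l j bl /=.
have [idT _ blkT] := block_unitri_Trs r x gD.
case: (eqVneq (blk x) b) => [bx|bx] /=.
  rewrite !mxE; apply: eq_bigr => a _.
  have [->|Tla] := eqVneq (Trs D r x l a) 0; first by rewrite !mul0r.
  by rewrite IH // -(blkT _ _ Tla).
rewrite IH // mulmx_idrow // => a; apply: idT.
by apply: contra bx => /eqP <-; rewrite bl.
Qed.

End EliminationProduct.

Local Notation pcols P := (map snd P).

Section RcaStep.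
Variables (F : fieldType) (m : nat).
Implicit Types (D : 'M[F]_m) (st : rca_state F m).

Lemma dsubK (j : 'I_m) r : (r <= j)%N -> (dsub j r + r)%N = j.
Proof. exact: subnK. Qed.

Lemma marked_colsP r st j : (j \in marked_cols r st) =
  [&& (r <= j)%N, st.1 (dsub j r) j != 0 & j \notin pcols st.2].
Proof. by rewrite mem_filter mem_enum andbT. Qed.

Lemma sorted_marked_cols r st : sorted (fun i j : 'I_m => (i < j)%N) (marked_cols r st).
Proof.
apply: sorted_filter; first by move=> i j l; apply: ltn_trans.
by rewrite -(@sorted_map _ _ val ltn) val_enum_ord iota_ltn_sorted.
Qed.

Lemma sorted_ltn_split (s : seq 'I_m) (x : 'I_m) : sorted (fun i j : 'I_m => (i < j)%N) s ->
  x \in s -> s = [seq y : 'I_m <- s | (y < x)%N] ++ x :: [seq y : 'I_m <- s | (x < y)%N].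
Proof.
elim: s => // y s IH /=; rewrite (path_sortedE (fun y x z : 'I_m => @ltn_trans y x z)).
move=> /andP[/allP gt_y sorted_s]; rewrite inE; case: eqVneq => [-> _|xy xs].
  rewrite ltnn; have -> : [seq z : 'I_m <- s | (y < z)%N] = s by apply/all_filterP/allP.
  suff -> : [seq z : 'I_m <- s | (z < y)%N] = [::] by [].
  rewrite -(filter_pred0 s); apply: eq_in_filter => z /gt_y /ltnW.
  by rewrite leqNgt => /negbTE.
have yx := gt_y x xs; rewrite yx ltnNge (ltnW yx) /=.
by congr (_ :: _); apply: IH.
Qed.

Lemma Trs_last D r (j : 'I_m) : j.+1 = m -> Trs D r j = 1%:M.
Proof.
move=> jm; rewrite /Trs big_pred0 ?subr0 // => q.
by apply/negbTE; rewrite -leqNgt -ltnS jm.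
Qed.

Lemma elim_prod1 D r (js : seq 'I_m) : (forall j, j \in js -> j.+1 = m) -> elim_prod D r js = 1%:M.
Proof.
elim: js => //= j js IH last_js.
have -> : Trs D r j = 1%:M by apply/Trs_last/last_js/mem_head.
by rewrite mul1mx IH // => x xs; apply: last_js; rewrite inE xs orbT.
Qed.

(* The update is skipped only when nothing is marked or when [r = m - 1]; in
   the latter case the only markable column is the last one, whose elimination
   matrix is the identity. *)
Lemma rca_stepE D P r : (r <= m.-1)%N ->
  let T := elim_prod D r (marked_cols r (D, P)) in
  rca_step (D, P) r =
    (invmx T *m D *m T, P ++ [seq (dsub j r, j) | j <- marked_cols r (D, P)]).
Proof.
move=> rm T; rewrite /rca_step /=; case: ifP => // /negbT no_update.
suff -> : T = 1%:M by rewrite invmx1 mul1mx mulmx1.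
move: no_update; rewrite negb_and negbK -ltnNge => /orP[lt_m2r|/eqP js0]; last by rewrite /T js0.
apply: elim_prod1 => j; rewrite marked_colsP => /andP[rj _].
by have := ltn_ord j; lia.
Qed.

End RcaStep.

Section Invariant.
Variables (F : fieldType) (m : nat) (blk : 'I_m -> nat).
Implicit Types (D : 'M[F]_m) (P : seq ('I_m * 'I_m)).

(* [D] and [P] are the matrix and the primary pivots after iterations
   [1, ..., r - 1]; [inv_diag0] says that the first [r - 1] diagonals are
   cleared outside the pivot columns. *)
Record rca_inv r D P : Prop := RcaInv {
  inv_graded : graded blk D;
  inv_sq0 : D *m D = 0;
  inv_pivot_neq0 : forall a j, (a, j) \in P -> D a j != 0;
  inv_pivot_row : forall a j q, (a, j) \in P -> q != j -> D a q != 0 -> q \in pcols P;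
  inv_pcol_row0 : forall j q, j \in pcols P -> D j q = 0;
  inv_diag0 : forall a q : 'I_m, (a < q)%N -> (q < a + r)%N -> q \notin pcols P -> D a q = 0;
  inv_below_pivot0 : forall a j (q : 'I_m), (a, j) \in P -> (a < q)%N -> D q j = 0;
  inv_pivot_diag : forall a j, (a, j) \in P -> (j < a + r)%N }.

Lemma rca_inv0 D : graded blk D -> D *m D = 0 -> rca_inv 1 D [::].
Proof. by move=> gD DD; split=> // a q aq; rewrite addn1 ltnS leqNgt aq. Qed.

Section Step.
Variables (r : nat) (D : 'M[F]_m) (P : seq ('I_m * 'I_m)).
Hypothesis inv : rca_inv r D P.
Let js := marked_cols r (D, P).
Let T := elim_prod D r js.
Let D' := invmx T *m D *m T.
Let P' := P ++ [seq (dsub j r, j) | j <- js].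

Let lower0 (i j : 'I_m) : (j <= i)%N -> D i j = 0.
Proof. exact/graded_lower0/(inv_graded inv). Qed.

Let uT : block_unitri blk (mem js) T.
Proof. exact/block_unitri_elim_prod/(inv_graded inv). Qed.

Let uTV : block_unitri blk (mem js) (invmx T).
Proof. exact/block_unitri_invmx_elim_prod/(inv_graded inv). Qed.

Lemma marked_ge s : s \in js -> (r <= s)%N.
Proof. by rewrite marked_colsP => /and3P[]. Qed.

Lemma marked_pivot_neq0 s : s \in js -> D (dsub s r) s != 0.
Proof. by rewrite marked_colsP => /and3P[]. Qed.

Lemma marked_notin_pcols s : s \in js -> s \notin pcols P.
Proof. by rewrite marked_colsP => /and3P[]. Qed.

Lemma dsub_marked_addK s : s \in js -> (dsub s r + r)%N = s.
Proof. by move/marked_ge/dsubK. Qed.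

Lemma marked_col_below0 s (l : 'I_m) : s \in js -> (dsub s r < l)%N -> D l s = 0.
Proof.
move=> sjs al; have [sl|ls] := leqP s l; first exact: lower0.
apply: (inv_diag0 inv ls); last exact: marked_notin_pcols.
by rewrite -(dsub_marked_addK sjs) ltn_add2r.
Qed.

(* [D^2 = 0] at the entry [(x - r, y)]: left of [x], row [x - r] is supported
   on pivot columns, whose rows vanish. *)
Lemma sq0_below_neq0 (x y : 'I_m) : (r <= x)%N ->
  D (dsub x r) x != 0 -> D x y != 0 -> exists2 q : 'I_m, (x < q)%N & D q y != 0.
Proof.
move=> rx Dax Dxy; apply/exists_inP; apply: contraT => /exists_inPn below0.
have others0 : \sum_(q | q != x) D (dsub x r) q * D q y = 0.
  apply: big1 => q qx; have [xq|qx'] := ltnP x q.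
    by rewrite (eqP (negbNE (below0 q xq))) mulr0.
  have [qP|qP] := boolP (q \in pcols P); first by rewrite (inv_pcol_row0 inv _ qP) mulr0.
  have [aq|qa] := ltnP (dsub x r) q; last by rewrite (lower0 qa) mul0r.
  suff -> : D (dsub x r) q = 0 by rewrite mul0r.
  by apply: (inv_diag0 inv aq _ qP); rewrite dsubK // ord_ltn_neqAle qx qx'.
have /matrixP/(_ (dsub x r) y) := inv_sq0 inv; rewrite !mxE (bigD1 x) //= others0 addr0.
by move/eqP; rewrite mulf_eq0 (negbTE Dax) (negbTE Dxy).
Qed.

Lemma marked_pivot_row_notin s : s \in js -> dsub s r \notin js.
Proof.
move=> sjs; apply/negP => ajs.
have [q aq] := sq0_below_neq0 (marked_ge ajs) (marked_pivot_neq0 ajs) (marked_pivot_neq0 sjs).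
by rewrite (marked_col_below0 sjs aq) eqxx.
Qed.

Lemma pivot_row_notin_marked a j : (a, j) \in P -> a \notin js.
Proof.
move=> aj; apply/negP => ajs.
have [q aq] := sq0_below_neq0 (marked_ge ajs) (marked_pivot_neq0 ajs) (inv_pivot_neq0 inv aj).
by rewrite (inv_below_pivot0 inv aj aq) eqxx.
Qed.

Lemma conj_elim_row i q : i \notin js -> D' i q = (D *m T) i q.
Proof. by move=> ijs; rewrite /D' -mulmxA; apply: mulmx_idrow => k; apply: (unitri_idrow uTV). Qed.

(* The factors before [s] see zeros in row [s - r], the factor of [s] clears
   the row beyond [s], and the later factors then see zeros again. *)
Lemma marked_pivot_row_elim s q : s \in js ->
  (D *m T) (dsub s r) q = if (s < q)%N then 0 else D (dsub s r) q.
Proof.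
move=> sjs; set a := dsub s r.
rewrite /T /js (sorted_ltn_split (sorted_marked_cols r (D, P)) sjs) elim_prod_cat /=.
set pre := [seq y <- _ | _]; set post := [seq y <- _ | _].
have gD := inv_graded inv.
have row_pre q' : (D *m elim_prod D r pre) a q' = D a q'.
  apply: (mulmx_unitri_fix (block_unitri_elim_prod r pre gD)) => l.
  rewrite /= mem_filter => /andP[ls ljs] _.
  have [la|al] := leqP l a; first exact: lower0.
  apply: (inv_diag0 inv al); last exact: marked_notin_pcols.
  by rewrite dsub_marked_addK.
have row_s q' : (D *m elim_prod D r pre *m Trs D r s) a q' = if (s < q')%N then 0 else D a q'.
  rewrite TrsE mulmx_elim_mxE !row_pre /pivot_ratio -/a.
  case: (s < q')%N; last by rewrite mul0r mulr0 subr0.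
  by rewrite mul1r mulrCA mulfV ?mulr1 ?subrr // marked_pivot_neq0.
rewrite !mulmxA (mulmx_unitri_fix (block_unitri_elim_prod r post gD)) ?row_s // => l.
by rewrite /= mem_filter => /andP[sl _] _; rewrite row_s sl.
Qed.

Lemma diag_next0 (l q : 'I_m) : q \notin pcols P -> q \notin js -> (q <= l + r)%N -> D l q = 0.
Proof.
move=> qP qjs qlr; have [ql|lq] := leqP q l; first exact: lower0.
have [qlr'|lrq] := ltnP q (l + r); first exact: (inv_diag0 inv lq).
have qE : (l + r)%N = q by apply/eqP; rewrite eqn_leq lrq qlr.
have -> : l = dsub q r by apply: val_inj; rewrite /= -qE addnK.
by apply: contraNeq qjs => Daq; rewrite marked_colsP Daq qP andbT -{1}qE leq_addl.
Qed.

Lemma mulmx_elim_diag0 (l q : 'I_m) : q \notin pcols P -> q \notin js -> (q <= l + r)%N ->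
  (D *m T) l q = 0.
Proof.
move=> qP qjs qlr; rewrite (mulmx_unitri_fix uT) ?diag_next0 // => p /= pjs pq.
have [pl|lp] := leqP p l; first exact: lower0.
by apply: (inv_diag0 inv lp (leq_trans pq qlr)); apply: marked_notin_pcols.
Qed.

Lemma mulmx_elim_below0 (a y : 'I_m) : (forall l : 'I_m, (a < l)%N -> D l y = 0) ->
  (y <= a + r)%N -> forall l : 'I_m, (a < l)%N -> (D *m T) l y = 0.
Proof.
move=> below0 ya l al; rewrite mxE big1 // => p _.
have [->|py] := eqVneq p y; first by rewrite below0 ?mul0r.
have [->|Tpy] := eqVneq (T p y) 0; first by rewrite mulr0.
have pjs : p \in js by apply: contraNT Tpy => pjs; rewrite (unitri_idrow uT) ?(negbTE py).
have lt_py : (p < y)%N by rewrite ord_ltn_neqAle py (unitri_upper uT Tpy).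
have [pl|lp] := leqP p l; first by rewrite lower0 ?mul0r.
rewrite (inv_diag0 inv lp) ?mul0r ?marked_notin_pcols //.
by rewrite (leq_trans lt_py) // (leq_trans ya) // leq_add2r ltnW.
Qed.

Lemma mem_next_pivots x y : ((x, y) \in P') = ((x, y) \in P) || (y \in js) && (x == dsub y r).
Proof.
rewrite mem_cat; congr orb; apply/mapP/andP => [[j jjs [-> ->]]|[yjs /eqP ->]].
  by rewrite jjs eqxx.
by exists y.
Qed.

Lemma next_pcols : pcols P' = pcols P ++ js.
Proof. by rewrite map_cat -map_comp map_id. Qed.

Lemma marked_pivot_row_support s (q : 'I_m) : s \in js -> (q < s)%N ->
  D (dsub s r) q != 0 -> q \in pcols P.
Proof.
move=> sjs qs; apply: contraTT => qP; rewrite negbK; apply/eqP.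
have [aq|qa] := ltnP (dsub s r) q; last exact: lower0.
by apply: (inv_diag0 inv aq) => //; rewrite dsub_marked_addK.
Qed.

Lemma conj_old_pivot_row a j q : (a, j) \in P -> D' a q = D a q.
Proof.
move=> aj; rewrite conj_elim_row ?(pivot_row_notin_marked aj) //.
apply: (mulmx_unitri_fix uT) => l ljs _; apply: contraNeq (marked_notin_pcols ljs) => Dal.
by case: (eqVneq l j) => [->|lj]; [apply: (map_f snd aj) | apply: (inv_pivot_row inv aj lj Dal)].
Qed.

Lemma conj_new_pivot_row s q : s \in js ->
  D' (dsub s r) q = if (s < q)%N then 0 else D (dsub s r) q.
Proof. by move=> sjs; rewrite conj_elim_row ?marked_pivot_row_notin // marked_pivot_row_elim. Qed.

Lemma conj_pcol_row0 j q : j \in pcols P -> D' j q = 0.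
Proof.
move=> jP; have jjs : j \notin js by apply: contraTN jP => /marked_notin_pcols.
by rewrite conj_elim_row // mxE big1 // => l _; rewrite (inv_pcol_row0 inv _ jP) mul0r.
Qed.

Lemma conj_new_pivot_row_support s q : s \in js -> q != s -> D' (dsub s r) q != 0 ->
  q \in pcols P.
Proof.
move=> sjs qs; rewrite conj_new_pivot_row //; case: ltnP => [_|le_qs]; first by rewrite eqxx.
by apply: marked_pivot_row_support; rewrite // ord_ltn_neqAle qs.
Qed.

(* [D'^2 = 0] read at the entry [(s - r, q)]: the term through [s] is the only survivor. *)
Lemma conj_marked_row0 s q : s \in js -> D' s q = 0.
Proof.
move=> sjs; have others0 : \sum_(l | l != s) D' (dsub s r) l * D' l q = 0.
  apply: big1 => l ls; have [->|Dal] := eqVneq (D' (dsub s r) l) 0; first by rewrite mul0r.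
  by rewrite (conj_pcol_row0 _ (conj_new_pivot_row_support sjs ls Dal)) mulr0.
have D'D' : D' *m D' = 0 := sq0_conj (inv_sq0 inv) (elim_prod_unit D r js).
move/matrixP/(_ (dsub s r) q): D'D'.
rewrite mxE (bigD1 s) //= others0 addr0 (conj_new_pivot_row _ sjs) ltnn [X in _ = X]mxE => /eqP.
by rewrite mulf_eq0 (negbTE (marked_pivot_neq0 sjs)) /= => /eqP.
Qed.

Lemma conj_diag0 (a q : 'I_m) : (a < q)%N -> (q < a + r.+1)%N -> q \notin pcols P' -> D' a q = 0.
Proof.
rewrite next_pcols mem_cat negb_or addnS ltnS => aq qar /andP[qP qjs].
rewrite /D' -mulmxA; apply: (unitri_mulmx_eq0 uTV) => l al.
by apply: mulmx_elim_diag0 => //; rewrite (leq_trans qar) // leq_add2r.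
Qed.

Lemma conj_below_pivot0 a j (q : 'I_m) : (a, j) \in P' -> (a < q)%N -> D' q j = 0.
Proof.
move=> aj aq; rewrite /D' -mulmxA; apply: (unitri_mulmx_eq0 uTV) => l ql.
move: aj; rewrite mem_next_pivots => /orP[ajP|/andP[jjs /eqP aE]].
  have below0 (l' : 'I_m) : (a < l')%N -> D l' j = 0 := inv_below_pivot0 inv ajP.
  exact: (mulmx_elim_below0 below0 (ltnW (inv_pivot_diag inv ajP)) (leq_trans aq ql)).
have below0 (l' : 'I_m) : (dsub j r < l')%N -> D l' j = 0 := marked_col_below0 jjs.
rewrite aE in aq; apply: (mulmx_elim_below0 below0 _ (leq_trans aq ql)).
by rewrite dsub_marked_addK.
Qed.

Lemma rca_inv_conj : rca_inv r.+1 D' P'.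
Proof.
split.
- exact: graded_conj (inv_graded inv) uT uTV.
- exact: sq0_conj (inv_sq0 inv) (elim_prod_unit D r js).
- move=> a j; rewrite mem_next_pivots => /orP[ajP|/andP[jjs /eqP ->]].
    by rewrite (conj_old_pivot_row _ ajP) (inv_pivot_neq0 inv ajP).
  by rewrite (conj_new_pivot_row _ jjs) ltnn marked_pivot_neq0.
- move=> a j q; rewrite mem_next_pivots next_pcols mem_cat.
  case/orP=> [ajP|/andP[jjs /eqP ->]] qj.
    by rewrite (conj_old_pivot_row _ ajP) => /(inv_pivot_row inv ajP qj) ->.
  by move/(conj_new_pivot_row_support jjs qj) ->.
- move=> j q; rewrite next_pcols mem_cat => /orP[].
    exact: conj_pcol_row0.
  exact: conj_marked_row0.
- exact: conj_diag0.
- exact: conj_below_pivot0.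
- move=> a j; rewrite mem_next_pivots addnS ltnS.
  case/orP=> [/(inv_pivot_diag inv)/ltnW //|/andP[jjs /eqP ->]].
  by rewrite dsub_marked_addK.
Qed.

End Step.

Lemma rca_inv_step r D P : rca_inv r D P -> (r <= m.-1)%N ->
  rca_inv r.+1 (rca_step (D, P) r).1 (rca_step (D, P) r).2.
Proof. by move=> inv rm; rewrite rca_stepE //; apply: rca_inv_conj. Qed.

End Invariant.

Section Run.
Variables (F : fieldType) (m : nat) (blk : 'I_m -> nat).

Definition rca_iter (D : 'M[F]_m) n := foldl (@rca_step F m) (D, [::]) (iota 1 n).

Lemma rca_runE D : rca_run D = rca_iter D (m - 1).
Proof. by []. Qed.

Lemma rca_iterS D n : rca_iter D n.+1 = rca_step (rca_iter D n) n.+1.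
Proof. by rewrite /rca_iter -[n.+1]addn1 iotaD foldl_cat /= addnC. Qed.

Lemma rca_inv_iter D n : graded blk D -> D *m D = 0 -> (n <= m.-1)%N ->
  rca_inv blk n.+1 (rca_iter D n).1 (rca_iter D n).2.
Proof.
move=> gD DD; elim: n => [_|n IH lt_nm]; first exact: rca_inv0.
rewrite rca_iterS; case: (rca_iter D n) (IH (ltnW lt_nm)) => D0 P0 inv0.
exact: rca_inv_step inv0 lt_nm.
Qed.

Lemma rca_iter_pivots_sub D n n' : (n <= n')%N ->
  {subset (rca_iter D n).2 <= (rca_iter D n').2}.
Proof.
move=> /subnKC <-; rewrite /rca_iter iotaD foldl_cat.
elim: (iota _ (n' - n)) (foldl _ (D, [::]) _) => [|r rs IH] st p pst //.
by apply: IH; rewrite /rca_step /= mem_cat pst.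
Qed.

End Run.

(* [Pf] stands for the primary pivots of the complete run on Delta and [Jp] for
   ~J_{k-1}. *)
Section BlockSimulation.
Variables (F : fieldType) (m : nat) (blk : 'I_m -> nat) (k : nat) (Jp : {set 'I_m}).
Variable Pf : seq ('I_m * 'I_m).
Hypothesis k_gt0 : (0 < k)%N.
Hypothesis Jp_pcols : forall i, blk i = k.-1 -> (i \in Jp) = (i \in pcols Pf).
Hypothesis Pf_rows_free : forall p, p \in Pf -> p.1 \notin pcols Pf.
Implicit Types (D M N : 'M[F]_m) (P : seq ('I_m * 'I_m)).

Local Notation mask D := (bs_input blk D k Jp).
Local Notation masked i j := [&& blk i == k.-1, i \notin Jp & blk j == k].

Definition kpivots P := [seq p <- P | blk p.2 == k].

Lemma maskE D i j : mask D i j = if masked i j then D i j else 0.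
Proof. by rewrite mxE. Qed.

Lemma mem_pcols_kpivots j P : (j \in pcols (kpivots P)) = (blk j == k) && (j \in pcols P).
Proof.
apply/mapP/andP => [[p pP ->]|[bj /mapP[p pP pE]]].
  by move: pP; rewrite mem_filter => /andP[-> pP]; split=> //; apply: map_f.
by exists p => //; rewrite mem_filter -pE bj.
Qed.

Lemma prev_blk_neq : (k.-1 == k) = false.
Proof. by apply/eqP; lia. Qed.

Lemma graded_next_blk D i j : graded blk D -> D i j != 0 -> blk i = k.-1 -> blk j = k.
Proof.
move=> gD /gD[_ [bj1 ->]] /(congr1 succn).
by rewrite !prednK.
Qed.

Lemma mask_conj S S' D N M : graded blk D -> block_unitri blk S N -> block_unitri blk S' M ->
  (forall i, blk i = k.-1 -> i \notin Jp -> ~~ S i) -> mask (N *m D *m M) = mask D *m M.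
Proof.
move=> gD uN uM Sfree; apply/matrixP => i j; rewrite maskE.
case: ifP => [/and3P[/eqP bi iJ /eqP bj]|unmasked].
  have rowN l : N i l = (i == l)%:R by apply/(unitri_idrow uN)/Sfree.
  rewrite -mulmxA mulmx_idrow // !mxE; apply: eq_bigr => l _; rewrite maskE bi eqxx iJ /=.
  case: (eqVneq (blk l) k) => // bl; have [->|Dil] := eqVneq (D i l) 0; first by rewrite !mul0r.
  by case/eqP: bl; apply: graded_next_blk Dil bi.
rewrite mxE big1 // => l _; rewrite maskE.
case: ifP => [/and3P[bi iJ /eqP bl]|_]; last by rewrite mul0r.
have [->|Mlj] := eqVneq (M l j) 0; first by rewrite mulr0.
by move: unmasked; rewrite bi iJ -(unitri_blk uM Mlj) bl eqxx.
Qed.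

Lemma unitri_mulmx_mask S N D : block_unitri blk S N -> (forall i, S i -> blk i = k) ->
  N *m mask D = mask D.
Proof.
move=> uN Sk; apply: (unitri_mulmx_id uN) => a l i; rewrite maskE.
case: ifP => [/and3P[/eqP ba _ _] _ bi|_]; last by rewrite eqxx.
by apply/negP => /Sk; rewrite bi ba => /eqP; rewrite prev_blk_neq.
Qed.

Lemma mask_mulmx_filter_blk D r js : graded blk D ->
  mask D *m elim_prod D r [seq j <- js | blk j == k] = mask D *m elim_prod D r js.
Proof.
move=> gD; apply/matrixP => i j; rewrite !mxE; apply: eq_bigr => l _; rewrite maskE.
by case: ifP => [/and3P[_ _ /eqP bl]|_]; rewrite ?mul0r // elim_prod_filter_blk.
Qed.

Section SimulationStep.
Variables (r : nat) (D : 'M[F]_m) (P : seq ('I_m * 'I_m)).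
Hypothesis inv : rca_inv blk r D P.
Let js := marked_cols r (D, P).
Hypothesis marked_final : forall j, j \in js -> (dsub j r, j) \in Pf.

Lemma marked_row_unmasked j : j \in js -> blk (dsub j r) = k.-1 -> dsub j r \notin Jp.
Proof. by move=> jjs bj; rewrite Jp_pcols // (Pf_rows_free (marked_final jjs)). Qed.

Lemma mask_pivot_row j q : j \in js -> blk j = k -> mask D (dsub j r) q = D (dsub j r) q.
Proof.
move=> jjs bj; have [_ [_ ba]] := inv_graded inv (marked_pivot_neq0 jjs).
rewrite bj in ba; rewrite maskE ba eqxx (marked_row_unmasked jjs ba) /=.
case: eqVneq => // bq; have [->//|Daq] := eqVneq (D (dsub j r) q) 0.
by case/eqP: bq; apply: graded_next_blk (inv_graded inv) Daq ba.
Qed.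

Lemma marked_cols_mask : marked_cols r (mask D, kpivots P) = [seq j <- js | blk j == k].
Proof.
rewrite /js /marked_cols -filter_predI; apply: eq_filter => j /=.
have := marked_colsP r (D, P) j => /= <-; rewrite mem_pcols_kpivots.
case: (eqVneq (blk j) k) => [bj|bj] /=; last by rewrite maskE (negbTE bj) !andbF /= eqxx /= andbF.
have [jjs|jnjs] := boolP (j \in js).
  by rewrite mask_pivot_row //; move: jjs; rewrite marked_colsP => /and3P[-> -> ->].
apply/and3P => -[rj]; rewrite maskE bj eqxx andbT.
case: ifP => [_ Daj jP|_]; last by rewrite eqxx.
by case/negP: jnjs; rewrite marked_colsP rj Daj.
Qed.

Lemma rca_step_mask : (r <= m.-1)%N ->
  rca_step (mask D, kpivots P) r = (mask (rca_step (D, P) r).1, kpivots (rca_step (D, P) r).2).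
Proof.
move=> rm; rewrite !rca_stepE // marked_cols_mask -/js /=.
set jsk := [seq j <- js | blk j == k]; have gD := inv_graded inv.
congr (_, _); last by rewrite /kpivots filter_cat filter_map.
have jsk_blk j : j \in jsk -> blk j = k by rewrite mem_filter => /andP[/eqP].
rewrite (eq_elim_prod (D := D)) => [|j q /[dup] /jsk_blk bj]; last first.
  by rewrite mem_filter => /andP[_ jjs]; apply: mask_pivot_row.
rewrite (unitri_mulmx_mask _ (block_unitri_invmx_elim_prod r jsk gD) jsk_blk).
rewrite mask_mulmx_filter_blk // (mask_conj gD (block_unitri_invmx_elim_prod r js gD)
  (block_unitri_elim_prod r js gD)) // => i bi; apply: contra => ijs.
by rewrite Jp_pcols // (map_f snd (marked_final ijs)).
Qed.

End SimulationStep.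
End BlockSimulation.

Section BlockSequential.
Variables (F : fieldType) (m b : nat) (blk : 'I_m -> nat) (D : 'M[F]_m).
Hypothesis conn : connection_matrix b blk D.

Let gD : graded blk D. Proof. by case: conn => _ [_ [_]]. Qed.
Let DD : D *m D = 0. Proof. by case: conn => _ [_ []]. Qed.
Let Pf := (rca_run D).2.

Lemma rca_inv_run : rca_inv blk (m - 1).+1 (rca_run D).1 Pf.
Proof. by apply: rca_inv_iter; rewrite ?subn1. Qed.

Lemma final_pivot_row_free p : p \in Pf -> p.1 \notin pcols Pf.
Proof.
case: p => a j /= ajP; apply: contraTN (inv_pivot_neq0 rca_inv_run ajP) => aP.
by rewrite (inv_pcol_row0 rca_inv_run _ aP) eqxx.
Qed.

Lemma final_pcol_blk j : j \in pcols Pf -> (1 <= blk j <= b)%N.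
Proof.
case/mapP=> -[a j'] ajP -> /=; case: conn => [[blk_le _] _]; rewrite blk_le andbT.
by have [_ []] := inv_graded rca_inv_run (inv_pivot_neq0 rca_inv_run ajP).
Qed.

Lemma rca_iter_mask k (Jp : {set 'I_m}) n : (0 < k)%N ->
  (forall i, blk i = k.-1 -> (i \in Jp) = (i \in pcols Pf)) -> (n <= m - 1)%N ->
  rca_iter (bs_input blk D k Jp) n =
    (bs_input blk (rca_iter D n).1 k Jp, kpivots blk k (rca_iter D n).2).
Proof.
move=> k_gt0 Jp_pcols; elim: n => [//|n IH lt_nm].
rewrite !rca_iterS IH ?(ltnW lt_nm) //; case E: (rca_iter D n) => [Dn Pn].
apply: (rca_step_mask k_gt0 Jp_pcols final_pivot_row_free).
- by have := rca_inv_iter gD DD (n := n); rewrite E; apply; lia.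
- move=> j jjs; apply: (rca_iter_pivots_sub (n := n.+1)); first lia.
  by rewrite rca_iterS E /rca_step /= mem_cat map_f ?orbT.
lia.
Qed.

Lemma bs_cols_final k i : blk i = k -> (i \in bs_cols blk D k) = (i \in pcols Pf).
Proof.
elim: k i => [|k IH] i bi /=.
  by rewrite in_set0; apply/esym/negP => /final_pcol_blk; rewrite bi.
rewrite /rca_pivot_cols rca_runE inE (rca_iter_mask (k := k.+1) _ IH) //.
by rewrite mem_pcols_kpivots bi eqxx.
Qed.

Lemma rca_run_bs_matrix k : (0 < k)%N -> rca_run (bs_matrix blk D k) =
  (bs_input blk (rca_run D).1 k (bs_cols blk D k.-1), kpivots blk k Pf).
Proof. by move=> k_gt0; rewrite rca_runE rca_iter_mask // => i /bs_cols_final. Qed.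

End BlockSequential.

Theorem mainTheorem14 (F : fieldType) (m b : nat) (blk : 'I_m -> nat)
    (D : 'M[F]_m) :
  connection_matrix b blk D ->
  (forall k : nat, (1 <= k <= b)%N ->
     forall i j : 'I_m, blk i = k.-1 -> blk j = k ->
       rca_final D i j = rca_final (bs_matrix blk D k) i j) /\
  rca_pivots D = \bigcup_(1 <= k < b.+1) rca_pivots (bs_matrix blk D k).
Proof.
move=> conn; split=> [k /andP[k_gt0 _] i j bi bj|].
  rewrite /rca_final (rca_run_bs_matrix conn) // maskE bi bj !eqxx andbT /=.
  case: ifP => // /negbFE; rewrite (bs_cols_final conn) // => iP.
  exact: (inv_pcol_row0 (rca_inv_run conn) j iP).
apply/setP => p; rewrite /rca_pivots inE.
rewrite (big_morph (fun A : {set _} => p \in A) (in_setU p) (in_set0 p)) big_has.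
apply/idP/hasP => [pP|[k]].
  have /andP[blk_gt0 blk_le] := final_pcol_blk conn (map_f snd pP).
  exists (blk p.2); first by rewrite mem_index_iota blk_gt0 ltnS.
  by rewrite /rca_pivots (rca_run_bs_matrix conn) // inE mem_filter eqxx.
rewrite mem_index_iota => /andP[k_gt0 _].
by rewrite /rca_pivots (rca_run_bs_matrix conn) // inE mem_filter => /andP[].
Qed.
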